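(* Let $\Gamma=(\Gamma^\alpha)_{\alpha\in\{0,1\}^k}$ be a vector of complex numbers indexed by $\{0,1\}^k$ such that for all $\alpha,\beta\in\{0,1\}^k$, writing $p_1<\cdots<p_l$ for the positions where $\alpha$ and $\beta$ differ, \[ \sum_{i=1}^{l}(-1)^{i}\,\Gamma^{\alpha\oplus e_{p_i}}\,\Gamma^{\beta\oplus e_{p_i}}=0 . \] Then $\Gamma$ satisfies the Parity Condition: either $\Gamma^\alpha=0$ for all $\alpha$ of odd Hamming weight, or $\Gamma^\alpha=0$ for all $\alpha$ of even Hamming weight.
   Context: $\oplus$ denotes bitwise XOR and $e_j\in\{0,1\}^k$ is the string with a $1$ in position $j$ and $0$ elsewhere. *)

From HB Require Import structures.
From mathcomp Require Import all_boot all_order all_algebra.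
From mathcomp Require Import complex.
From mathcomp Require Import Rstruct.
Set Implicit Arguments. Unset Strict Implicit. Unset Printing Implicit Defensive.
Import Order.TTheory GRing.Theory Num.Theory.
Local Open Scope ring_scope.

Definition CC := complex Rdefinitions.R.

Definition bstr (k : nat) := {ffun 'I_k -> bool}.

(* alpha (+) e_j : flip bit j (j a 0-based position, j < k). *)
Definition flip (k : nat) (a : bstr k) (j : 'I_k) : bstr k :=
  [ffun i => if i == j then ~~ a i else a i].

Definition diffpos (k : nat) (a b : bstr k) : seq 'I_k :=
  [seq i <- enum 'I_k | a i != b i].

Definition hweight (k : nat) (a : bstr k) : nat := #|[set i | a i]|.

Definition relation_sum (k : nat) (G : bstr k -> CC) (a b : bstr k) : CC :=
  let s := diffpos a b in
  \sum_(i < size s)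
    (-1) ^+ i.+1 * (G (flip a (tnth (in_tuple s) i)) * G (flip b (tnth (in_tuple s) i))).

Definition parity_condition (k : nat) (G : bstr k -> CC) : Prop :=
  (forall a : bstr k, odd (hweight a) -> G a = 0) \/
  (forall a : bstr k, ~~ odd (hweight a) -> G a = 0).

From HB Require Import structures.
From mathcomp Require Import all_boot all_order all_algebra complex Rstruct.
From mathcomp Require Import ring zify.
Set Implicit Arguments.
Unset Strict Implicit.
Unset Printing Implicit Defensive.

Import GRing.Theory Num.Theory.
Local Open Scope ring_scope.

(* The maps h |-> h \o s_i induced by commuting involutions s_i are commuting
   involutions, with joint eigenvalues +-1; hence c + sum_i eps_i (h |-> h \o s_i)
   only has eigenvalues congruent to c + n mod 2 and is injective when c + n is
   odd.  The induction realises this by splitting h along the eigenvalues of the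
   last involution.  For Gamma, put d := alpha (+) beta and
   h(gamma) := Gamma^gamma Gamma^(gamma (+) d): the hypothesis on the pair
   (gamma, gamma (+) d) reads sum_i (-1)^i h(gamma (+) e_(p_i)) = 0, with p the
   support of d.  If |d| is odd this forces h = 0, so Gamma^alpha Gamma^beta = 0
   whenever alpha and beta have weights of different parity. *)

Definition shift_relation (R : pzRingType) (T : Type) (n : nat) (c : R)
    (s : 'I_n -> T -> T) (e : 'I_n -> nat) (h : T -> R) :=
  forall x, c * h x + \sum_(i < n) (-1) ^+ e i * h (s i x) = 0.

Lemma shift_relation_split (R : comPzRingType) (T : Type) (n : nat) (c u : R)
    (s : 'I_n.+1 -> T -> T) (e : 'I_n.+1 -> nat) (h : T -> R) :
    u * u = 1 -> involutive (s ord_max) ->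
    (forall i x, s i (s ord_max x) = s ord_max (s i x)) -> shift_relation c s e h ->
  shift_relation (c + u * (-1) ^+ e ord_max)
    (fun i => s (widen_ord (leqnSn n) i)) (fun i => e (widen_ord (leqnSn n) i))
    (fun x => h x + u * h (s ord_max x)).
Proof.
move=> uu sK sC Hh x; set t := s ord_max; set eps : R := (-1) ^+ e ord_max.
have := Hh x; have := Hh (t x); rewrite !big_ord_recr /= sK -/t -/eps.
under eq_bigr => i _ do rewrite sC.
set S1 := \sum_(i < n) _; set S2 := \sum_(i < n) _ => E2 E1.
under eq_bigr => i _ do rewrite mulrDr mulrCA.
rewrite big_split /= -mulr_sumr -/S1 -/S2.
have -> : (c + u * eps) * (h x + u * h (t x)) + (S2 + u * S1)
    = (c * h x + (S2 + eps * h (t x))) + u * (c * h (t x) + (S1 + eps * h x))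
      + (u * u - 1) * (eps * h (t x)) by ring.
by rewrite E1 E2 uu subrr !(mulr0, mul0r, addr0).
Qed.

Lemma shift_relation_eq0 (R : numDomainType) (T : Type) (n : nat) (c : int)
    (s : 'I_n -> T -> T) (e : 'I_n -> nat) (h : T -> R) :
    (forall i, involutive (s i)) -> (forall i j x, s i (s j x) = s j (s i x)) ->
    ~~ (2 %| c + n%:Z)%Z -> shift_relation c%:~R s e h ->
  forall x, h x = 0.
Proof.
elim: n c s e h => [|n IHn] c s e h sK sC c_odd Hh x.
  have /eqP := Hh x; rewrite big_ord0 addr0 mulf_eq0 intr_eq0.
  by case/orP=> /eqP // c0; lia.
set t := s ord_max; set eps : R := (-1) ^+ e ord_max.
have IH (u : R) (d : int) : u * u = 1 -> c%:~R + u * eps = (c + d)%:~R ->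
    ~~ (2 %| c + d + n%:Z)%Z -> h x + u * h (t x) = 0.
  move=> uu cd cd_odd; apply: (IHn (c + d) (fun i => s (widen_ord (leqnSn n) i))
    (fun i => e (widen_ord (leqnSn n) i)) (fun y => h y + u * h (t y)))
    => [i|i j y||].
  - exact: sK.
  - exact: sC.
  - exact: cd_odd.
  - by rewrite -cd; apply: shift_relation_split.
have eps2 : eps * eps = 1 by rewrite -expr2 sqrr_sign.
have hp : h x + eps * h (t x) = 0.
  by apply: (IH _ 1); rewrite ?eps2 ?intrD //; lia.
have hm : h x + - eps * h (t x) = 0.
  by apply: (IH _ (-1)); rewrite ?mulrNN ?mulNr ?eps2 ?intrD //; lia.
have /eqP := congr2 +%R hp hm; rewrite addr0 addrACA mulNr subrr addr0 -mulr2n.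
by rewrite mulrn_eq0 => /eqP.
Qed.

Lemma flipK k (p : 'I_k) : involutive (fun a : bstr k => flip a p).
Proof. by move=> a; apply/ffunP => i; rewrite !ffunE; case: eqP; rewrite ?negbK. Qed.

Lemma flipC k (a : bstr k) (p q : 'I_k) : flip (flip a p) q = flip (flip a q) p.
Proof. by apply/ffunP => i; rewrite !ffunE; case: eqP; case: eqP. Qed.

Definition bxor k (a b : bstr k) : bstr k := [ffun i => a i (+) b i].

Lemma bxorKA k (a b : bstr k) : bxor a (bxor a b) = b.
Proof. by apply/ffunP => i; rewrite !ffunE addKb. Qed.

Lemma bxor_flip k (a d : bstr k) (p : 'I_k) : bxor (flip a p) d = flip (bxor a d) p.
Proof. by apply/ffunP => i; rewrite !ffunE; case: eqP; rewrite ?addNb. Qed.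

Lemma diffposE k (a b : bstr k) : diffpos a b = [seq i <- enum 'I_k | bxor a b i].
Proof. by apply: eq_filter => i; rewrite ffunE; case: (a i); case: (b i). Qed.

Lemma odd_count_neq (T : Type) (a b : pred T) (s : seq T) :
  odd (count (fun x => a x != b x) s) = odd (count a s) (+) odd (count b s).
Proof.
elim: s => [|x s IHs] //=; rewrite !oddD IHs.
by case: (a x); case: (b x); case: (odd (count a s)); case: (odd (count b s)).
Qed.

Lemma hweightE k (a : bstr k) : hweight a = count (fun i => a i) (enum 'I_k).
Proof.
rewrite /hweight cardsE cardE /enum_mem size_filter -enumT.
by rewrite (@eq_filter _ _ predT) ?filter_predT.
Qed.

Lemma odd_size_diffpos k (a b : bstr k) :
  odd (size (diffpos a b)) = odd (hweight a) (+) odd (hweight b).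
Proof. by rewrite size_filter !hweightE odd_count_neq. Qed.

Lemma relation_sum_bxor k (G : bstr k -> CC) (a d : bstr k) :
  relation_sum G a (bxor a d) =
  \sum_(i < size [seq j <- enum 'I_k | d j])
    (-1) ^+ i.+1 * (G (flip a (tnth (in_tuple [seq j <- enum 'I_k | d j]) i)) *
                    G (bxor (flip a (tnth (in_tuple [seq j <- enum 'I_k | d j]) i)) d)).
Proof.
rewrite /relation_sum diffposE bxorKA.
by apply: eq_bigr => i _; rewrite bxor_flip.
Qed.

Lemma odd_distance_mul_eq0 k (G : bstr k -> CC) (a b : bstr k) :
    (forall a b : bstr k, relation_sum G a b = 0) ->
    odd (size (diffpos a b)) -> G a * G b = 0.
Proof.
move=> HG; rewrite diffposE; set D := [seq j <- _ | _] => D_odd.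
rewrite -(bxorKA a b).
apply: (@shift_relation_eq0 _ _ (size D) 0 (fun i x => flip x (tnth (in_tuple D) i))
  (fun i => i.+1) (fun x => G x * G (bxor x (bxor a b)))) => [i|i j x||x].
- exact: flipK.
- exact: flipC.
- lia.
- by rewrite mul0r add0r -relation_sum_bxor HG.
Qed.

Theorem theorem2 (k : nat) (G : bstr k -> CC) :
  (forall a b : bstr k, relation_sum G a b = 0) -> parity_condition G.
Proof.
move=> HG.
case: (boolP [exists a, odd (hweight a) && (G a != 0)]) => [|no_odd].
  case/existsP=> a /andP[a_odd Ga]; right=> b b_even.
  have /eqP : G a * G b = 0.
    by apply: odd_distance_mul_eq0; rewrite // odd_size_diffpos a_odd (negbTE b_even).
  by rewrite mulf_eq0 (negbTE Ga) => /eqP.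
left=> a a_odd; apply/eqP; apply: contraNT no_odd => Ga.
by apply/existsP; exists a; rewrite a_odd.
Qed.
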